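(* There exists a sequence $S\in\{0,1\}^\omega$ such that for all $0<\alpha<1$, FS-depth$(S)\ge 1-\alpha$ and PD-depth$(S)<\alpha$.
   Context: $S\upharpoonright n$ is the length-$n$ prefix of $S$. A finite-state transducer (FST) is $T=(Q,q_0,\delta,\nu)$ with finite state set $Q$, start state $q_0$, $\delta:Q\times\{0,1\}\to Q$, $\nu:Q\times\{0,1\}\to\{0,1\}^*$; $T(\lambda)=\lambda$, $T(xb)=T(x)\nu(\hat\delta(x),b)$. FSTs are described by the following fixed binary representation $\sigma$. For $n\ge1$, $\mathrm{bin}(n)$ is the binary representation of $n$ and $\mathrm{string}(n)$ is $\mathrm{bin}(n)$ with its leading 1 removed. For $x=x_1\cdots x_l$, $x^\dagger=x_10x_20\cdots x_{l-1}0x_l1$, $x^\diamond=\overline{(1x)^\dagger}$ (bitwise complement), and $d(x)=x_1x_1\cdots x_lx_l$. For an FST with states $q_1,\dots,q_m$, write for $1\le i\le m$, $b\in\{0,1\}$, $t=2i-1+b$: $(\delta(q_i,b),\nu(q_i,b))=(q_{1+(n_t \bmod m)},\mathrm{string}(n'_t))$; its transition table is encoded as $\pi=\mathrm{bin}(n_1)^\ddagger\mathrm{string}(n'_1)^\diamond\cdots\mathrm{bin}(n_{2m})^\ddagger\mathrm{string}(n'_{2m})^\diamond$, where $\mathrm{bin}(n_t)^\ddagger$ is empty if the corresponding transition is a self-loop and $\mathrm{bin}(n_t)^\dagger$ otherwise. The string $d(\mathrm{bin}(i))01\pi$ describes that FST with start state $q_i$. $|T|$ is the length of the shortest description of $T$,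 $\mathrm{FST}^{\le k}=\{T:|T|\le k\}$, and $D^k(x)=\min\{|y|: T\in\mathrm{FST}^{\le k},\,T(y)=x\}$ ($\infty$ if no such $y$). FS-depth$(S)\ge\alpha$ means: for every $k\in\mathbb{N}$ there is $k'\in\mathbb{N}$ such that $D^k(S\upharpoonright n)-D^{k'}(S\upharpoonright n)\ge\alpha n$ for infinitely many $n$. A pushdown compressor (PDC) is $C=(Q,\Gamma,\delta,\nu,q_0,z_0,c)$ with finite state set, stack alphabet $\Gamma=\{0,1,z_0\}$ ($z_0$ bottom-of-stack, never removed), partial transition function $\delta: Q\times(\{0,1\}\cup\{\lambda\})\times\Gamma\to Q\times\Gamma^*$ (top stack symbol replaced by the given string), output function $\nu$ on the same domain into $\{0,1\}^*$, and $c$ bounding consecutive $\lambda$-transitions (reading no input, popping top symbol, outputting nothing); for each $q,a$ either $\delta(q,\lambda,a)$ or both $\delta(q,b,a)$ are undefined. $C(w)$ is the output on $w$ and $\delta_Q(w)$ the final state; $C$ is an ILPDC if $w\mapsto(C(w),\delta_Q(w))$ is injective. ILUPDCs are the same with stack alphabet $\{0,z_0\}$. PD-depth$(S)\ge\alpha$ means: for every ILUPDC $C$ there is an ILPDC $C'$ with $|C(S\upharpoonright n)|-|C'(S\upharpoonright n)|\ge\alpha n$ for all but finitely many $n$; PD-depth$(S)<\alpha$ means this fails. *)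

From HB Require Import structures.
From mathcomp Require Import all_boot all_order all_algebra.
From mathcomp Require Import all_classical all_reals ereal.
From mathcomp Require Import Rstruct.

Set Implicit Arguments.
Unset Strict Implicit.
Unset Printing Implicit Defensive.

Import Order.TTheory GRing.Theory Num.Theory.

(* Binary strings are [seq bool] (false = 0, true = 1); infinite       *)
(* sequences are [nat -> bool].                                        *)

Definition prefix (S : nat -> bool) (n : nat) : seq bool := mkseq S n.

(* little-endian bits of n (the fuel n is always enough) *)
Fixpoint lebits (fuel n : nat) : seq bool :=
  match fuel with
  | 0 => [::]
  | fuel'.+1 => if n == 0 then [::] else odd n :: lebits fuel' n./2
  end.

Definition bin (n : nat) : seq bool := rev (lebits n n).

Definition string_of (n : nat) : seq bool := behead (bin n).

Fixpoint dagger (x : seq bool) : seq bool :=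
  match x with
  | [::] => [::]
  | a :: x' => if x' is [::] then [:: a; true] else a :: false :: dagger x'
  end.

Definition diamond (x : seq bool) : seq bool := map negb (dagger (true :: x)).

Definition dbl (x : seq bool) : seq bool := flatten (map (fun b => [:: b; b]) x).

(* An FST with m = fm.+1 states q_1,...,q_m, represented by the ordinals
   0,...,m-1 (state q_i is the ordinal i-1). *)
Record fst := FST {
  fm : nat;
  fstart : 'I_fm.+1;
  fdelta : 'I_fm.+1 -> bool -> 'I_fm.+1;
  fnu : 'I_fm.+1 -> bool -> seq bool
}.

Fixpoint fst_run_from (m : nat) (d : 'I_m -> bool -> 'I_m)
    (nu : 'I_m -> bool -> seq bool) (q : 'I_m) (y : seq bool) : seq bool :=
  match y with
  | [::] => [::]
  | b :: y' => nu q b ++ fst_run_from d nu (d q b) y'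
  end.

Definition fst_run (T : fst) (y : seq bool) : seq bool :=
  fst_run_from (@fdelta T) (@fnu T) (fstart T) y.

(* [describes p T] : the string p is a description of T under sigma:
   p = d(bin(i)) 01 pi, with i the (1-based) start state and
   pi = bin(n_1)^ddagger string(n'_1)^diamond ... bin(n_2m)^ddagger string(n'_2m)^diamond,
   where, for t = 2i-1+b, delta(q_i,b) = q_{1+(n_t mod m)} and
   nu(q_i,b) = string(n'_t). *)
Definition describes (p : seq bool) (T : fst) : Prop :=
  exists ns : 'I_(fm T).+1 -> bool -> nat,
    (forall j b, 0 < ns j b /\ ns j b %% (fm T).+1 = @fdelta T j b) /\
    let code j b :=
      (if @fdelta T j b == j then [::] else dagger (bin (ns j b)))
        ++ diamond (@fnu T j b) in
    p = dbl (bin (fstart T).+1) ++ [:: false; true]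
          ++ flatten [seq code j false ++ code j true | j <- enum 'I_(fm T).+1].

Definition fst_le (k : nat) (T : fst) : Prop :=
  exists p, describes p T /\ size p <= k.

Definition Dk (k : nat) (x : seq bool) : \bar Rdefinitions.R :=
  ereal_inf [set ((size y)%:R)%:E
            | y in [set y | exists T, fst_le k T /\ fst_run T y = x]].

(* FS-depth(S) >= a : for every k there is k' with
   D^k(S|n) - D^{k'}(S|n) >= a n for infinitely many n
   (the inequality is read as D^k >= D^{k'} + a n in the extended reals). *)
Definition FS_depth_ge (S : nat -> bool) (a : Rdefinitions.R) : Prop :=
  forall k : nat, exists k' : nat, forall N : nat, exists2 n : nat, N <= n &
    (Dk k' (prefix S n) + (a * n%:R)%:E <= Dk k (prefix S n))%E.

(* A PDC whose stack alphabet is [option G]: [None] is the bottom symbol z0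
   and [Some g] the other symbols.  G = bool gives {0,1,z0} (ILPDC),
   G = unit gives {0,z0} (ILUPDC).  Input [None] stands for lambda. *)
Record pdc (G : Type) := PDC {
  pQ : finType;
  pq0 : pQ;
  pdelta : pQ -> option bool -> option G -> option (pQ * seq (option G));
  pnu : pQ -> option bool -> option G -> seq bool;
  pc : nat
}.

Section PDCSem.
Variables (G : Type) (C : pdc G).

(* one lambda transition from configuration (q, stack) (top = head) *)
Definition lam_step (cfg : pQ C * seq (option G)) :
    option (pQ C * seq (option G)) :=
  match cfg.2 with
  | [::] => None
  | a :: st => match @pdelta _ C cfg.1 None a with
               | Some (q', g) => Some (q', g ++ st)
               | None => None
               end
  end.

Fixpoint lam_chain (n : nat) (cfg : pQ C * seq (option G)) :
    option (pQ C * seq (option G)) :=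
  match n with
  | 0 => Some cfg
  | n'.+1 => match lam_step cfg with
             | Some cfg' => lam_chain n' cfg'
             | None => None
             end
  end.

Fixpoint close (n : nat) (q : pQ C) (st : seq (option G)) :
    pQ C * seq (option G) * seq bool :=
  match n with
  | 0 => (q, st, [::])
  | n'.+1 =>
    match st with
    | [::] => (q, st, [::])
    | a :: st' =>
      match @pdelta _ C q None a with
      | Some (q', g) =>
          let '(q2, st2, o2) := close n' q' (g ++ st') in
          (q2, st2, @pnu _ C q None a ++ o2)
      | None => (q, st, [::])
      end
    end
  end.

Fixpoint pdc_run_from (q : pQ C) (st : seq (option G)) (w : seq bool) :
    option (seq bool * pQ C) :=
  match w with
  | [::] => Some ([::], q)
  | b :: w' =>
    match st with
    | [::] => None
    | a :: st' =>
      match @pdelta _ C q (Some b) a with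
      | None => None
      | Some (q1, g) =>
        let '(q2, st2, o2) := close (pc C) q1 (g ++ st') in
        match pdc_run_from q2 st2 w' with
        | None => None
        | Some (o, qf) => Some (@pnu _ C q (Some b) a ++ o2 ++ o, qf)
        end
      end
    end
  end.

Definition pdc_run (w : seq bool) : option (seq bool * pQ C) :=
  pdc_run_from (pq0 C) [:: None] w.

(* |C(w)| (the [None] case never occurs for an ILPDC, which is total) *)
Definition pdc_outlen (w : seq bool) : nat :=
  if pdc_run w is Some (o, _) then size o else 0.

Definition pdc_valid : Prop :=
  (* determinism: a lambda transition excludes both input transitions *)
  (forall q a, @pdelta _ C q None a <> None ->
      @pdelta _ C q (Some false) a = None /\ @pdelta _ C q (Some true) a = None) /\
  (forall q a q' g, @pdelta _ C q None a = Some (q', g) ->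
      g = [::] /\ @pnu _ C q None a = [::]) /\
  (* the bottom symbol z0 is never removed *)
  (forall q b q' g, @pdelta _ C q b None = Some (q', g) ->
      exists g', g = rcons g' None) /\
  (* c bounds the number of consecutive lambda transitions *)
  (forall q st, lam_chain (pc C).+1 (q, st) = None).

Definition pdc_IL : Prop := pdc_valid /\ injective pdc_run.

End PDCSem.

Definition ILPDC (C : pdc bool) : Prop := pdc_IL C.
Definition ILUPDC (C : pdc unit) : Prop := pdc_IL C.

Definition PD_depth_ge (S : nat -> bool) (a : Rdefinitions.R) : Prop :=
  forall C : pdc unit, ILUPDC C ->
    exists2 C' : pdc bool, ILPDC C' &
      exists N : nat, forall n : nat, N <= n ->
        ((pdc_outlen C (prefix S n))%:R - (pdc_outlen C' (prefix S n))%:R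
           >= a * n%:R)%R.

(* For each level i, counting gives a block R_i of (i+1)K_i bits that no
   transducer of description size at most i produces, from any state and with
   up to i of its bits already emitted, on at most i K_i input bits.  Stage
   j+1 of the sequence appends to stage j (of length p) 3p+1 copies of R_i,
   where i is the 2-adic valuation of j, followed by a run of zeros much
   longer than everything before it; every level occurs for infinitely many j.
   After the copies, small transducers need more than i K_i input bits per
   copy, while a fixed two-state transducer printing R_i on input 1 needs
   2p + 3p + 1 bits in total; once a i > 3 this is an FS-depth gap of
   (1 - a) n.  After a zero run, the information-lossless unary compressor
   that emits one bit per B+1 zeros outputs fewer than (2/(B+1)) n < a n
   bits, so no ILPDC beats it by a n. *)

From Pilot Require Import Defs.
From HB Require Import structures.
From mathcomp Require Import all_boot all_order all_algebra.
From mathcomp Require Import all_classical all_reals ereal.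
From mathcomp Require Import Rstruct.
From mathcomp Require Import lra zify.

Set Implicit Arguments.
Unset Strict Implicit.
Unset Printing Implicit Defensive.

Import Order.TTheory GRing.Theory Num.Theory.

Lemma prefix_cat2l (T : eqType) (s s1 s2 : seq T) :
  prefix (s ++ s1) (s ++ s2) = prefix s1 s2.
Proof. by elim: s => //= x s IH; rewrite eqxx. Qed.

Lemma prefix_drop_catl (T : eqType) (u s1 s2 : seq T) :
  prefix s1 (u ++ s2) -> prefix (drop (size u) s1) s2.
Proof.
move/prefixP=> [s E]; have [le|lt] := leqP (size u) (size s1); last first.
  by rewrite drop_oversize ?prefix0s // ltnW.
rewrite -[s1 in s1 ++ s](cat_take_drop (size u)) -catA in E.
move/eqP: E; rewrite eqseq_cat ?size_takel //.
by case/andP=> _ /eqP ->; exact: prefix_prefix.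
Qed.

Lemma nth_prefix (T : eqType) (x0 : T) s1 s2 n :
  prefix s1 s2 -> n < size s1 -> nth x0 s1 n = nth x0 s2 n.
Proof. by case/prefixP=> s ->; rewrite nth_cat => ->. Qed.

Lemma nseq_cat_cons (T : Type) n (x : T) s :
  nseq n x ++ x :: s = x :: nseq n x ++ s.
Proof. by elim: n => //= n ->. Qed.

Section FstRun.
Variables (m : nat) (d : 'I_m -> bool -> 'I_m) (nu : 'I_m -> bool -> seq bool).
Local Notation run := (fst_run_from d nu).

Lemma fst_run_from_cat q y1 y2 :
  run q (y1 ++ y2) = run q y1 ++ run (foldl d q y1) y2.
Proof. by elim: y1 q => //= b y IH q; rewrite IH catA. Qed.

Variable L : nat.
Hypothesis size_nu : forall q b, size (nu q b) <= L.

Lemma fst_run_from_prefix_split q y X : prefix X (run q y) ->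
  exists y1 y2 u, [/\ y = y1 ++ y2, run q y1 = X ++ u & size u <= L].
Proof.
elim: y q X => [|b y IH] q X.
  by rewrite prefixs0 => /eqP ->; exists [::], [::], [::].
rewrite [run q _]/=.
have [le|lt] := leqP (size X) (size (nu q b)) => HX.
  exists [:: b], y, (drop (size X) (nu q b)); split=> //=.
    move: HX; rewrite prefixE takel_cat // cats0 => /eqP {1}<-.
    by rewrite cat_take_drop.
  by rewrite size_drop; apply: leq_trans (leq_subr _ _) (size_nu q b).
have /IH [y1 [y2 [u [-> E uL]]]] := prefix_drop_catl HX.
exists (b :: y1), y2, u; split=> //=.
move/prefixP: HX => [s /(congr1 (take (size (nu q b))))].
rewrite (take_size_cat _ (erefl (size (nu q b)))) (takel_cat _ (ltnW lt)) => nuX.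
by rewrite E catA {1}nuX cat_take_drop.
Qed.

Lemma fst_run_from_prefix_cat q y X Z : prefix (X ++ Z) (run q y) ->
  exists y1 y2 (u : seq bool),
    [/\ y = y1 ++ y2, prefix X (run q y1), size u <= L
       & prefix (drop (size u) Z) (run (foldl d q y1) y2)].
Proof.
move=> XZ.
have [y1 [y2 [u [Ey E uL]]]] := fst_run_from_prefix_split (catl_prefix XZ).
exists y1, y2, u; split=> //; first by rewrite E prefix_prefix.
apply: prefix_drop_catl; move: XZ.
by rewrite Ey fst_run_from_cat E -catA prefix_cat2l.
Qed.

Variables (R : seq bool) (t : nat).
Hypothesis size_R : L < size R.
(* [dd <= L] bits of [R] may already have been emitted by the transition that
   completed the previous copy of [R]. *)
Hypothesis R_incompressible : forall q v dd, dd <= L ->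
  prefix (drop dd R) (run q v) -> t < size v.

Lemma fst_run_from_repeat_size n q y dd : dd <= L ->
  prefix (drop dd (flatten (nseq n R))) (run q y) -> n * t.+1 <= size y.
Proof.
elim: n q y dd => [|n IH] q y dd ddL //=.
rewrite drop_cat (leq_ltn_trans ddL size_R).
case/fst_run_from_prefix_cat=> y1 [y2 [u [-> Rq uL /(IH _ _ _ uL) le]]].
by rewrite size_cat mulSn leq_add // (R_incompressible ddL Rq).
Qed.

End FstRun.

Lemma size_dagger x : size (dagger x) = (size x).*2.
Proof. by elim: x => //= a [|b x] // IH; rewrite /= IH. Qed.

Lemma size_diamond x : size (diamond x) = (size x).+1.*2.
Proof. by rewrite size_map size_dagger. Qed.

Lemma fst_has_description T : exists p, describes p T.
Proof.
eexists; exists (fun j b => (@fdelta T j b : nat) + (fm T).+1).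
split=> // j b; split; first by rewrite addnS.
by rewrite modnDr modn_small.
Qed.

Definition fst_bounded (i : nat) (T : fst) :=
  fm T <= i /\ forall j b, size (@fnu T j b) <= i.

Lemma fst_le_bounded k i T : fst_le k T -> k <= i -> fst_bounded i T.
Proof.
case=> p [[ns [_ /= ->]] le_pk] le_ki.
set F := (fun j : 'I_(fm T).+1 => _ ++ _) in le_pk.
have sizeF : size (flatten [seq F j | j <- enum 'I_(fm T).+1]) = \sum_j size (F j).
  by rewrite size_flatten /shape -map_comp sumnE big_map big_enum.
have nuF j b : size (@fnu T j b) < size (F j).
  by rewrite /F !size_cat !size_diamond; case: b; lia.
move: le_pk; rewrite size_cat /= sizeF => le_pk; split=> [|j b].
  have : \sum_(j < (fm T).+1) 1 <= \sum_j size (F j).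
    by apply: leq_sum => j _; apply: leq_ltn_trans (nuF j true).
  rewrite sum1_card card_ord; lia.
move: le_pk; rewrite (bigD1 j) //=; have := nuF j b; lia.
Qed.

Definition fst_table (i : nat) :=
  {ffun 'I_i.+1 * bool -> 'I_i.+1 * i.-bseq bool}.

Definition table_run i (tau : fst_table i) (q : 'I_i.+1) (v : seq bool) :=
  fst_run_from (fun q b => (tau (q, b)).1) (fun q b => val (tau (q, b)).2) q v.

(* Table states beyond [fm T] are junk: they are never reached from [inord q]. *)
Definition table_of i (T : fst) : fst_table i :=
  [ffun qb : 'I_i.+1 * bool => let q := inord qb.1 : 'I_(fm T).+1 in
              (inord (@fdelta T q qb.2), insub_bseq i (@fnu T q qb.2))].

Lemma fst_run_table_of i T q v : fst_bounded i T ->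
  fst_run_from (@fdelta T) (@fnu T) q v = table_run (table_of i T) (inord q) v.
Proof.
case=> le_mi le_nu; rewrite /table_run; elim: v q => //= b v IH q.
have qK : inord (inord q : 'I_i.+1) = q.
  by apply: val_inj; rewrite /= !inordK // (leq_trans (ltn_ord q)).
by rewrite ffunE /= qK IH val_insubd le_nu.
Qed.

Lemma exists_notin_codom (A B : finType) (f : A -> B) :
  #|A| < #|B| -> exists b, b \notin codom f.
Proof.
move=> ltAB; have /subsetPn [b _ nfb] : ~~ (B \subset codom f).
  apply: contraTN ltAB => /subset_leq_card le_B; rewrite -leqNgt.
  by rewrite (leq_trans le_B) // -(size_codom f) card_size.
by exists b.
Qed.

Section IncompressibleBlock.
Variable i : nat.

Definition short_run := (fst_table i * 'I_i.+1 * i.-bseq bool)%type.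
Definition code_size := #|{: short_run}|.+1.
Definition input_bound := i * code_size.
Definition block_size := i.+1 * code_size.

(* A block with a prefix [w] already emitted and the rest produced by a table
   on an input [v] of [input_bound] bits is [expand (tau, q, w, v)]; as
   [#|short_run| < 2 ^ code_size], some block is not of this form. *)
Definition expand (x : short_run * input_bound.-tuple bool) :
    block_size.-tuple bool :=
  let: (tau, q, w, v) := x in
  [tuple nth false (w ++ table_run tau q v) k | k < block_size].

Definition block_tuple : block_size.-tuple bool :=
  odflt [tuple false | _ < block_size] [pick R | R \notin codom expand].

Lemma block_tuple_notin_codom : block_tuple \notin codom expand.
Proof.
rewrite /block_tuple; case: pickP => [R //|all_codom].
have lt_card :
    #|{: short_run * input_bound.-tuple bool}| < #|{: block_size.-tuple bool}|.
  rewrite card_prod !card_tuple card_bool /block_size mulSn expnD.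
  rewrite ltn_pmul2r ?expn_gt0 //.
  exact: ltn_trans (ltnSn _) (ltn_expl _ (isT : 1 < 2)).
by have [R] := exists_notin_codom expand lt_card; rewrite all_codom.
Qed.

Lemma block_incompressible T q v dd : fst_bounded i T -> dd <= i ->
  prefix (drop dd block_tuple) (fst_run_from (@fdelta T) (@fnu T) q v) ->
  input_bound < size v.
Proof.
move=> bT le_di /prefixP [s Es]; rewrite ltnNge; apply/negP => le_v.
pose w := insub_bseq i (take dd block_tuple).
have wE : val w = take dd block_tuple.
  by rewrite val_insubd size_take_min geq_min le_di.
have v'P : size (v ++ nseq (input_bound - size v) false) == input_bound.
  by rewrite size_cat size_nseq subnKC.
apply: (negP block_tuple_notin_codom); apply/codomP.
exists (table_of i T, inord q, w, Tuple v'P); apply: eq_from_tnth => k.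
rewrite tnth_mktuple (tnth_nth false) /= wE -(fst_run_table_of _ _ bT).
rewrite fst_run_from_cat Es !catA cat_take_drop -!catA.
by rewrite nth_cat size_tuple ltn_ord.
Qed.

End IncompressibleBlock.

Definition block (i : nat) : seq bool := block_tuple i.

Lemma size_block i : size (block i) = block_size i.
Proof. exact: size_tuple. Qed.

Lemma blocks_input_size i T y P n : fst_bounded i T ->
  prefix (P ++ flatten (nseq n (block i))) (fst_run T y) ->
  n * (input_bound i).+1 <= size y.
Proof.
move=> bT /(fst_run_from_prefix_cat bT.2) [y1 [y2 [u [-> _ uL]]]].
have lt_i_block : i < size (block i).
  by rewrite size_block /block_size /code_size; nia.
move/(fst_run_from_repeat_size bT.2 lt_i_block
        (fun q v dd => block_incompressible bT) uL).
by rewrite size_cat => /leq_trans; apply; rewrite leq_addl.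
Qed.

(* Reading [0 b] emits the bit [b]; reading [1] emits [R]. *)
Definition block_fst (R : seq bool) : fst :=
  @FST 1 ord0 (fun q b => if (q == ord0) && ~~ b then ord_max else ord0)
    (fun q b => if q == ord0 then (if b then R else [::]) else [:: b]).

Definition escape (P : seq bool) := flatten [seq [:: false; b] | b <- P].

Lemma size_escape P : size (escape P) = (size P).*2.
Proof. by elim: P => //= b P ->. Qed.

Lemma block_fst_run R P n :
  fst_run (block_fst R) (escape P ++ nseq n true) = P ++ flatten (nseq n R).
Proof. by rewrite /fst_run; elim: P => [|b P /= ->] //=; elim: n => //= n ->. Qed.

Lemma Dk_le_size k T y : fst_le k T -> (Dk k (fst_run T y) <= (size y)%:R%:E)%E.
Proof.
move=> kT; apply: ge_ereal_inf.
by exists (size y)%:R%:E => //; exists y => //; exists T.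
Qed.

Lemma le_Dk k x (n : nat) :
  (forall T y, fst_le k T -> fst_run T y = x -> n <= size y) ->
  (n%:R%:E <= Dk k x)%E.
Proof.
move=> le_n; apply: le_ereal_inf_tmp => _ [y [T [kT Ex]] <-].
by rewrite lee_fin ler_nat (le_n T y kT Ex).
Qed.

Definition level (j : nat) := logn 2 j.

Lemma level_pow2_odd i N : level (2 ^ i * N.*2.+1) = i.
Proof.
rewrite /level lognM ?expn_gt0 // pfactorK // logn_coprime ?addn0 //.
by rewrite coprime2n /= odd_double.
Qed.

Definition add_blocks (j : nat) (W : seq bool) :=
  W ++ flatten (nseq (3 * size W).+1 (block (level j))).

Fixpoint stage (j : nat) : seq bool :=
  if j is j'.+1 then
    let Q := add_blocks j' (stage j') in Q ++ nseq (j' * (size Q).+1) false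
  else [::].

Definition deep_seq (n : nat) : bool := nth false (stage n.+1) n.

Lemma size_add_blocks j W :
  size (add_blocks j W) = size W + (3 * size W).+1 * block_size (level j).
Proof.
by rewrite size_cat size_flatten /shape map_nseq sumn_nseq size_block mulnC.
Qed.

Lemma size_stage j : j <= size (stage j).
Proof.
elim: j => //= j IH; rewrite size_cat size_add_blocks /block_size /code_size; nia.
Qed.

Lemma prefix_stage j j' : j <= j' -> prefix (stage j) (stage j').
Proof.
elim: j' => [|j' IH]; first by rewrite leqn0 => /eqP ->.
rewrite leq_eqVlt => /orP [/eqP ->|/IH le_j]; first exact: prefix_refl.
apply: prefix_trans le_j _; rewrite /= -catA; exact: prefix_prefix.
Qed.

Lemma deep_seq_prefix j s : prefix s (stage j) -> Defs.prefix deep_seq (size s) = s.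
Proof.
move=> s_j; apply: (@eq_from_nth _ false); first by rewrite size_mkseq.
move=> x; rewrite size_mkseq => lt_x; rewrite nth_mkseq //.
have sJ := prefix_trans s_j (prefix_stage (leq_maxl j x.+1)).
have xJ := prefix_stage (leq_maxr j x.+1).
by rewrite /deep_seq (nth_prefix _ xJ (size_stage _)) (nth_prefix _ sJ lt_x).
Qed.

Section RealArith.
Local Open Scope ring_scope.

Lemma exists_nat_mul_gt (R : archiRealFieldType) (a c : R) k :
  0 < a -> exists2 i, (k <= i)%N & c < a * i%:R.
Proof.
move=> a0; exists (maxn k (Num.bound `|c / a|)); first exact: leq_maxl.
rewrite -ltr_pdivrMl // mulrC.
apply: le_lt_trans (ler_norm _) (lt_le_trans (archi_boundP (normr_ge0 _)) _).
by rewrite ler_nat leq_maxr.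
Qed.

(* A stage of [p] bits followed by [m = 3p+1] blocks of [(i+1)K] bits: the
   block transducer reads [2p + m] bits, an [i]-bounded one [m (iK+1)]. *)
Lemma fs_gap_arith (R : realFieldType) (a : R) (p i K : nat) :
  0 < a -> 3 < a * i%:R -> (0 < K)%N ->
  (2 * p + (3 * p).+1)%:R + (1 - a) * (p + (3 * p).+1 * (i.+1 * K))%:R
    <= ((3 * p).+1 * (i * K).+1)%:R :> R.
Proof.
move=> a0 ai K0; rewrite -(ler_nat R) in K0.
rewrite !(natrD, natrM, mulrSr); set P := p%:R; set I := i%:R; set Kr := K%:R.
have P0 : 0 <= P by [].
have m0 : 0 <= 3 * P + 1 by lra.
have excess : 0 <= (a * I - 3) * ((3 * P + 1) * Kr).
  by rewrite mulr_ge0 ?subr_ge0 ?mulr_ge0 //; lra.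
have K_ge1 : 0 <= (Kr - 1) * (3 * P + 1) by rewrite mulr_ge0 // subr_ge0.
have aMK_ge0 : 0 <= a * ((3 * P + 1) * Kr) by rewrite !mulr_ge0 //; lra.
nra.
Qed.

Lemma pd_gap_arith (R : realFieldType) (a : R) (c n B : nat) :
  0 < a -> 2 < a * B%:R -> (c * B.+1 < 2 * n)%N -> c%:R < a * n%:R.
Proof.
move=> a0 aB; rewrite -(ltr_nat R) !natrM -natr1.
set Nr := n%:R; set Br := B%:R => lt_cn.
have N0 : 0 <= Nr by [].
have n_le : 2 * Nr <= a * Br * Nr by rewrite ler_wpM2r // ltW.
nra.
Qed.

End RealArith.

Lemma deep_seq_FS_depth (a : Rdefinitions.R) :
  (0 < a)%R -> FS_depth_ge deep_seq (1 - a)%R.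
Proof.
move=> a0 k; have [i le_ki ai] := exists_nat_mul_gt 3%R k a0.
have [p desc_p] := fst_has_description (block_fst (block i)).
exists (size p) => N; pose j := 2 ^ i * N.*2.+1; set W := stage j.
set m := (3 * size W).+1; set Q := add_blocks j W.
have QE : Q = W ++ flatten (nseq m (block i)).
  by rewrite /Q /add_blocks level_pow2_odd.
have size_Q : size Q = size W + m * block_size i.
  by rewrite size_add_blocks level_pow2_odd.
exists (size Q).
  have : N <= j by rewrite /j -[N]mul1n leq_mul ?expn_gt0 //; lia.
  have := size_stage j; rewrite size_Q -/W; lia.
rewrite (@deep_seq_prefix j.+1); last exact: prefix_prefix.
have ub : (Dk (size p) Q <= (2 * size W + m)%:R%:E)%E.
  have desc_le : fst_le (size p) (block_fst (block i)) by exists p.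
  have := Dk_le_size (escape W ++ nseq m true) desc_le.
  by rewrite block_fst_run -QE size_cat size_escape size_nseq -mul2n.
have lb : ((m * (input_bound i).+1)%:R%:E <= Dk k Q)%E.
  apply: le_Dk => T y kT runE; apply: blocks_input_size (fst_le_bounded kT le_ki) _.
  by rewrite runE QE; exact: prefix_refl.
apply: le_trans (leeD2r _ ub) (le_trans _ lb).
rewrite -EFinD lee_fin size_Q /block_size /input_bound.
exact: fs_gap_arith.
Qed.

Section UnaryCompressor.
Variable B : nat.

(* The state counts pending zeros: [B+1] of them are flushed as [0], and a [1]
   is emitted as [1 0^q 1] together with the [q] pending zeros. *)
Definition unary_step (q : 'I_B.+1) (b : bool) : 'I_B.+1 * seq bool :=
  if b then (ord0, true :: rcons (nseq q false) true)
  else if q == ord_max then (ord0, [:: false]) else (inord q.+1, [::]).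

Definition unary_pdc : pdc unit :=
  @PDC unit 'I_B.+1 ord0
    (fun q ob a => if (ob, a) is (Some b, None)
                   then Some ((unary_step q b).1, [:: None]) else None)
    (fun q ob a => if (ob, a) is (Some b, None) then (unary_step q b).2 else [::])
    0.

Fixpoint unary_out (q : 'I_B.+1) (w : seq bool) : seq bool :=
  if w is b :: w' then (unary_step q b).2 ++ unary_out (unary_step q b).1 w'
  else [::].

Definition unary_state (q : 'I_B.+1) (w : seq bool) : 'I_B.+1 :=
  foldl (fun q b => (unary_step q b).1) q w.

Lemma unary_pdc_run_from q w :
  @pdc_run_from _ unary_pdc q [:: None] w = Some (unary_out q w, unary_state q w).
Proof. by elim: w q => //= b w IH q; rewrite IH. Qed.

Lemma unary_pdc_outlen w : pdc_outlen unary_pdc w = size (unary_out ord0 w).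
Proof. by rewrite /pdc_outlen /pdc_run unary_pdc_run_from. Qed.

Fixpoint unary_decode (fuel : nat) (s : seq bool) : seq bool :=
  if fuel is fuel'.+1 then
    match s with
    | [::] => [::]
    | false :: s' => nseq B.+1 false ++ unary_decode fuel' s'
    | true :: s' => let q := index true s' in
                    nseq q false ++ true :: unary_decode fuel' (drop q.+1 s')
    end
  else [::].

Lemma lt_ord_max (q : 'I_B.+1) : q != ord_max -> q < B.
Proof.
move=> ne; have := ltn_ord q; rewrite ltnS leq_eqVlt => /orP [/eqP qB|//].
by case/eqP: ne; apply: val_inj.
Qed.

Lemma unary_decode_out w q fuel : size w <= fuel ->
  unary_decode fuel (unary_out q w) ++ nseq (unary_state q w) false =
  nseq q false ++ w.
Proof.
elim: w q fuel => [|b w IH] q [|fuel] //= le_w; rewrite ?cats0 //.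
rewrite /unary_step; case: b => /=.
  have index_flush s : index true (rcons (nseq q false) true ++ s) = q.
    by elim: (q : nat) => //= n ->.
  have drop_flush s : drop q.+1 (rcons (nseq q false) true ++ s) = s.
    by elim: (q : nat) => [|n IHn] /=; [exact: drop0 | exact: IHn].
  by rewrite index_flush drop_flush -catA /= IH.
case: eqP => [->|/eqP ne] /=; first by rewrite -catA IH //= nseq_cat_cons.
rewrite -[X in X ++ _]/(unary_decode fuel.+1 _) IH ?(ltnW le_w) //.
by rewrite inordK ?ltnS ?lt_ord_max // nseq_cat_cons.
Qed.

Lemma unary_pdc_IL : ILUPDC unary_pdc.
Proof.
split.
  split; first by move=> q [].
  split; first by move=> q [].
  split; first by move=> q [b|] q' g //= [_ <-]; exists [::].
  by move=> q [|a st].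
move=> w1 w2; rewrite /pdc_run !unary_pdc_run_from => -[out12 st12].
have := @unary_decode_out w1 ord0 _ (leq_addr (size w2) (size w1)).
by rewrite out12 st12 unary_decode_out // leq_addl.
Qed.

Lemma unary_out_cat q u v :
  unary_out q (u ++ v) = unary_out q u ++ unary_out (unary_state q u) v.
Proof. by elim: u q => //= b u IH q; rewrite IH catA. Qed.

Lemma size_unary_out q w : size (unary_out q w) <= B.+2 * size w.
Proof.
elim: w q => //= b w IH q; rewrite size_cat mulnS; apply: leq_add (IH _).
rewrite /unary_step; case: b => /=; last by case: eqP.
by rewrite size_rcons size_nseq ltnS.
Qed.

Lemma size_unary_out_zeros z q :
  size (unary_out q (nseq z false)) * B.+1 <= q + z.
Proof.
elim: z q => //= z IH q; rewrite /unary_step /=; case: eqP => [->|/eqP ne] /=.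
  by have := IH ord0; rewrite /= add0n; lia.
by have := IH (inord q.+1); rewrite inordK ?ltnS ?lt_ord_max //; lia.
Qed.

Lemma size_unary_out_padded q Q z : B.+2 ^ 2 * (size Q).+1 <= z ->
  size (unary_out q (Q ++ nseq z false)) * B.+1 < 2 * (size Q + z).
Proof.
move=> le_z; rewrite unary_out_cat size_cat mulnDl.
have := size_unary_out q Q; have := size_unary_out_zeros z (unary_state q Q).
have := ltn_ord (unary_state q Q); nia.
Qed.

End UnaryCompressor.

Lemma deep_seq_not_PD_depth (a : Rdefinitions.R) :
  (0 < a)%R -> ~ PD_depth_ge deep_seq a.
Proof.
move=> a0 PD; have [B _ aB] := exists_nat_mul_gt 2%R 0 a0.
have [C' _ [N HN]] := PD (unary_pdc B) (unary_pdc_IL B).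
pose j := maxn N (B.+2 ^ 2); set W := stage j.+1.
have le_N : N <= size W by apply: leq_trans (leq_maxl N _) (ltnW (size_stage j.+1)).
have := HN _ le_N; rewrite (deep_seq_prefix (prefix_refl W)) unary_pdc_outlen.
have : size (@unary_out B ord0 W) * B.+1 < 2 * size W.
  rewrite /W /= size_cat size_nseq; apply: size_unary_out_padded.
  by rewrite leq_mul2r leq_maxr orbT.
move/(pd_gap_arith a0 aB); have := ler0n Rdefinitions.R (pdc_outlen C' W); lra.
Qed.

Theorem mainTheorem4 :
  exists S : nat -> bool,
    forall a : Rdefinitions.R, (0 < a)%R -> (a < 1)%R ->
      FS_depth_ge S (1 - a)%R /\ ~ PD_depth_ge S a.
Proof.
exists deep_seq => a a0 _.
by split; [exact: deep_seq_FS_depth | exact: deep_seq_not_PD_depth].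
Qed.
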